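(* Let $w\ge 2$, $h\ge 3$, $1\le m<w$, and $G=P_w(U)\sqcap C_h$ where $U=\{1,2,\dots,m\}$ or $U=\{w-m+1,\dots,w\}$. (1) If $h\le 2m$, then $Z(G)\le h$. (2) If $2m<h<4m$, then $Z(G)\le 2m$. (3) If $h>4m$, then $Z(G)\le\lceil h/2\rceil$.
   Context: All graphs are finite, simple and undirected. Zero forcing: given a graph $G$ and a set $S\subseteq V(G)$ of initially filled vertices, the color change rule says that if a filled vertex $v$ has exactly one unfilled neighbor $u$, then $v$ forces $u$ to become filled. $S$ is a zero forcing set if repeatedly applying this rule eventually fills every vertex of $G$. The zero forcing number $Z(G)$ is the minimum cardinality of a zero forcing set of $G$. The path $P_n$ has vertex set $\{1,\dots,n\}$ and edges $\{k,k+1\}$ for $1\le k\le n-1$; the cycle $C_n$ ($n\ge3$) has vertex set $\{1,\dots,n\}$ and edges $\{k,k+1\}$ for $1\le k\le n-1$ together with $\{n,1\}$. Generalized hierarchical product: for graphs $W,H$ and $U\subseteq V(W)$ (the root set), $W(U)\sqcap H$ is the graph with vertex set $V(W)\times V(H)$ in which $(x_1,y_1)$ and $(x_2,y_2)$ are adjacent iff either ($x_1=x_2\in U$ and $y_1y_2\in E(H)$) or ($y_1=y_2$ and $x_1x_2\in E(W)$). *)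

From mathcomp Require Import all_boot all_order.
Set Implicit Arguments. Unset Strict Implicit. Unset Printing Implicit Defensive.

(* A simple graph on a finType T is given by its (symmetric, irreflexive)
   adjacency relation e. *)

(* Vertex 1..n of P_n / C_n is represented by the ordinal 0..n-1. *)
Definition path_rel (n : nat) : rel 'I_n :=
  fun i j => (i.+1 == j :> nat) || (j.+1 == i :> nat).

(* cycle C_n (meaningful for n >= 3): k ~ k+1 mod n *)
Definition cycle_rel (n : nat) : rel 'I_n :=
  fun i j => (i.+1 %% n == j :> nat) || (j.+1 %% n == i :> nat).

Definition hprod (A B : finType) (eW : rel A) (U : {set A}) (eH : rel B)
  : rel (A * B)%type :=
  fun p q => [&& p.1 == q.1, p.1 \in U & eH p.2 q.2]
          || ((p.2 == q.2) && eW p.1 q.1).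

Section ZeroForcing.
Variables (T : finType) (e : rel T).

Definition forced (S : {set T}) : {set T} :=
  [set u | [exists v, [&& v \in S, e v u, u \notin S &
                      [forall x, e v x ==> (x \in S) || (x == u)]]]].

Definition force_step (S : {set T}) : {set T} := S :|: forced S.

(* final coloring obtained by repeatedly applying the color change rule
   (#|T| rounds suffice; each non-final round adds a vertex) *)
Definition zf_closure (S : {set T}) : {set T} := iter #|T| force_step S.

Definition zero_forcing_set (S : {set T}) : bool := zf_closure S == setT.

(* zero forcing number: minimum size of a zero forcing set
   (setT is always one, so the default #|T| is never the only bound) *)
Definition Z : nat :=
  \big[minn/#|T|]_(S : {set T} | zero_forcing_set S) #|S|.
End ZeroForcing.

From mathcomp Require Import all_boot all_order zify.
Import Order.TTheory.
Set Implicit Arguments. Unset Strict Implicit. Unset Printing Implicit Defensive.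

(* Write vertices as (x, t), with x the distance along the path from the end
   carrying the roots (the roots are the x < m) and t the position on the
   cycle.  Off the roots a row is a path, filled from its far end (w-1, t);
   a root (x, t) whose row is full and whose row below is filled at (x, t-1)
   forces (x, t+1).  Hence two consecutive full rows plus the far end of the
   next row give that row, and upward forcing inside the roots forms a
   triangle that also reaches all but the last root two rows up, so from
   then on it suffices to seed the far end of every second row.  The far
   ends of 2m consecutive rows already fill those rows, and a gap of at most
   2m unseeded rows between two pairs of full rows closes, since the root
   triangles from both sides cover the first column of the gap.  Seeding the
   far ends of all rows, of 2m rows, or of 2m rows and then every second row
   up to such a gap gives the three bounds. *)

Section ZeroForcingClosure.
Variables (T : finType) (e : rel T).

Lemma subset_force_step (S : {set T}) : S \subset force_step e S.
Proof. exact: subsetUl. Qed.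

(* Each round of the color change rule either reaches a set closed under
   forcing or adds a vertex, so after #|T| rounds the closure is closed. *)
Lemma zero_forcing_set_closed (S : {set T}) :
  (forall C : {set T}, S \subset C -> forced e C \subset C -> C = setT) ->
  zero_forcing_set e S.
Proof.
move=> closedT; rewrite /zero_forcing_set /zf_closure.
have grow k : S \subset iter k (force_step e) S /\
    (iter k (force_step e) S = setT \/ k <= #|iter k (force_step e) S|).
  elim: k => [|k [subS IH]] /=; first by split; [exact: subxx | right].
  set A := iter k _ S in subS IH *.
  split; first exact: subset_trans subS (subset_force_step A).
  case: IH => [->|le_k_A]; first by left; rewrite /force_step setTU.
  have [clA|nclA] := boolP (forced e A \subset A).
    by left; rewrite /force_step (setUidPl clA); exact: closedT.
  right; apply: leq_ltn_trans le_k_A (proper_card _).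
  rewrite properEneq subset_force_step andbT; apply: contra nclA => /eqP eqA.
  by rewrite {2}eqA subsetUr.
have [_ [->|le_T]] := grow #|T|; first by [].
by rewrite eqEcard subsetT cardsT le_T.
Qed.

Lemma Z_le_card (S : {set T}) : zero_forcing_set e S -> Z e <= #|S|.
Proof.
move=> zS; rewrite /Z -minEnat.
exact: (@bigmin_le_cond _ nat _ _ S _ (fun A => #|A|) zS).
Qed.

Lemma forced_closed_mem (C : {set T}) v u :
  forced e C \subset C -> v \in C -> e v u ->
  (forall y, e v y -> y \in C \/ y = u) -> u \in C.
Proof.
move=> clC vC evu nbrC; apply: contraT => uC.
suff: u \in forced e C by move/(subsetP clC); rewrite (negbTE uC).
rewrite inE; apply/existsP; exists v; rewrite vC evu uC /=.
apply/forallP => y; apply/implyP => evy.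
by case: (nbrC y evy) => [->|->]; rewrite ?eqxx ?orbT.
Qed.

End ZeroForcingClosure.

Section Grid.
Variables (w h m : nat) (root_low : bool).
Hypotheses (m_gt0 : 0 < m) (m_lt_w : m < w) (h_gt0 : 0 < h).

(* [root_low] tells whether the roots sit at the low end {0, ..., m-1} of the
   path or at the high end; [pos x] is the path vertex at distance [x] from
   that end, so in these coordinates the roots are exactly the [x < m]. *)
Definition pos x := if root_low then x else w.-1 - x.

Definition root_set : {set 'I_w} :=
  if root_low then [set i : 'I_w | i < m] else [set i : 'I_w | w - m <= i].

Definition grid := hprod (@path_rel w) root_set (@cycle_rel h).

Let w_gt0 : 0 < w. Proof. exact: leq_ltn_trans m_lt_w. Qed.

(* The cycle coordinate is read modulo [h], so [t + h.-1] stands for [t - 1]. *)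
Definition vtx x t : 'I_w * 'I_h :=
  (Ordinal (ltn_pmod (pos x) w_gt0), Ordinal (ltn_pmod t h_gt0)).

Lemma pos_lt x : x < w -> pos x < w.
Proof. by rewrite /pos; case: root_low; lia. Qed.

Lemma vtx_pos x t : x < w -> val (vtx x t).1 = pos x.
Proof. by move=> lt_xw /=; rewrite modn_small ?pos_lt. Qed.

Lemma vtx_mod x t : vtx x (t %% h) = vtx x t.
Proof. by congr pair; apply: val_inj; rewrite /= modn_mod. Qed.

Lemma vtx_addh x t : vtx x (t + h) = vtx x t.
Proof. by rewrite -vtx_mod modnDr vtx_mod. Qed.

Lemma vtx_pred x t : vtx x (t.+1 + h.-1) = vtx x t.
Proof. by rewrite addSnnS prednK // vtx_addh. Qed.

Lemma pair_vtx (a : 'I_w) (b : 'I_h) x t :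
  x < w -> a = pos x :> nat -> b = (vtx x t).2 -> (a, b) = vtx x t.
Proof.
move=> lt_xw ea ->; congr pair; apply: val_inj.
by rewrite /= modn_small ?pos_lt.
Qed.

Lemma vtx_surj (p : 'I_w * 'I_h) : exists x t, [/\ x < w, t < h & p = vtx x t].
Proof.
case: p => a b; have lt_aw := ltn_ord a.
have lt_pos : pos a < w by exact: pos_lt.
exists (pos a), b; split=> //; apply: pair_vtx => //.
  by rewrite /pos; case: root_low; lia.
by apply: val_inj; rewrite /= modn_small.
Qed.

Lemma root_vtx x t : x < w -> ((vtx x t).1 \in root_set) = (x < m).
Proof.
move=> lt_xw; rewrite /root_set; have := vtx_pos t lt_xw; rewrite /pos.
by case: root_low => ex; rewrite inE ex; apply/idP/idP; lia.
Qed.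

Let modSn a : (a %% h).+1 %% h = a.+1 %% h.
Proof. by rewrite -addn1 modnDml addn1. Qed.

Lemma grid_next x t : x.+1 < w -> grid (vtx x t) (vtx x.+1 t).
Proof.
move=> lt_xw; apply/orP; right; apply/andP; split=> //.
rewrite /path_rel !vtx_pos //; last exact: ltnW.
by rewrite /pos; case: root_low; apply/orP; [left | right]; apply/eqP; lia.
Qed.

Lemma grid_prev x t : 0 < x -> x < w -> grid (vtx x t) (vtx x.-1 t).
Proof.
move=> x_gt0 lt_xw; apply/orP; right; apply/andP; split=> //.
rewrite /path_rel !vtx_pos //; last exact: leq_ltn_trans (leq_pred x) lt_xw.
by rewrite /pos; case: root_low; apply/orP; [right | left]; apply/eqP; lia.
Qed.

Lemma grid_up x t : x < m -> grid (vtx x t) (vtx x t.+1).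
Proof.
move=> lt_xm; apply/orP; left; rewrite eqxx root_vtx ?lt_xm; last lia.
by rewrite /cycle_rel /= modSn eqxx.
Qed.

Lemma grid_down x t : x < m -> grid (vtx x t) (vtx x (t + h.-1)).
Proof.
move=> lt_xm; apply/orP; left; rewrite eqxx root_vtx ?lt_xm; last lia.
rewrite /cycle_rel /=; apply/orP; right.
by rewrite modSn -addSn addSnnS prednK // modnDr.
Qed.

Lemma grid_adj x t y : x < w -> grid (vtx x t) y ->
  [\/ 0 < x /\ y = vtx x.-1 t, x.+1 < w /\ y = vtx x.+1 t,
      x < m /\ y = vtx x t.+1 | x < m /\ y = vtx x (t + h.-1)].
Proof.
move=> lt_xw; case: y => a b; rewrite /grid /hprod /=.
case/orP=> [/and3P [/eqP ea root_a cyc] | /andP [/eqP eb adj_ab]].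
  have lt_xm : x < m by rewrite -(root_vtx t lt_xw).
  move: cyc; rewrite /cycle_rel /= -ea => /orP [/eqP up | /eqP down].
    apply: Or43; split=> //; congr pair; apply: val_inj.
    by rewrite /= -up modSn.
  apply: Or44; split=> //; congr pair; apply: val_inj => /=.
  rewrite -modnDml -down modnDml addSnnS prednK // modnDr modn_small //.
move: adj_ab; rewrite /path_rel vtx_pos // -eb; have lt_aw := ltn_ord a.
rewrite /pos; case Eo: root_low => /orP [/eqP ea | /eqP ea];
  [apply: Or42 | apply: Or41 | apply: Or41 | apply: Or42];
  (split; first lia); by apply: pair_vtx => //; [lia | rewrite /pos Eo; lia].
Qed.

Lemma grid_force (C : {set 'I_w * 'I_h}) x t u :
  forced grid C \subset C -> x < w -> vtx x t \in C -> grid (vtx x t) u ->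
  (0 < x -> vtx x.-1 t \in C \/ vtx x.-1 t = u) ->
  (x.+1 < w -> vtx x.+1 t \in C \/ vtx x.+1 t = u) ->
  (x < m -> vtx x t.+1 \in C \/ vtx x t.+1 = u) ->
  (x < m -> vtx x (t + h.-1) \in C \/ vtx x (t + h.-1) = u) -> u \in C.
Proof.
move=> clC lt_xw vC adj_u prevC nextC upC downC.
apply: (forced_closed_mem clC vC adj_u) => y /(grid_adj lt_xw).
by case=> [[/prevC ? ->] | [/nextC ? ->] | [/upC ? ->] | [/downC ? ->]].
Qed.

Section ClosedSet.
Variable C : {set 'I_w * 'I_h}.
Hypothesis C_closed : forced grid C \subset C.

Definition row_full t := forall x, x < w -> vtx x t \in C.

Lemma row_full_addh t : row_full t -> row_full (t + h).
Proof. by move=> Ft x lt_xw; rewrite vtx_addh; exact: Ft. Qed.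

Lemma closed_setT : (forall t, t < h -> row_full t) -> C = setT.
Proof.
move=> full; apply/setP => p; rewrite inE.
by have [x [t [lt_xw lt_th ->]]] := vtx_surj p; exact: full.
Qed.

Lemma tail_filled t x : vtx w.-1 t \in C -> m.-1 <= x -> x < w -> vtx x t \in C.
Proof.
move=> endC; have [d le_d] : exists d, w.-1 - x <= d by exists (w.-1 - x).
elim: d x le_d => [|d IH] x le_d le_x lt_xw; first by have -> : x = w.-1 by lia.
have [le_d'|lt_d] := leqP (w.-1 - x) d; first exact: IH.
apply: (@grid_force C x.+1 t) => //; try lia.
- by apply: IH; lia.
- by apply: grid_prev; lia.
- by right.
- by left; apply: IH; lia.
Qed.

Lemma triangle_up t i x : row_full t -> row_full t.+1 -> x + i <= m ->
  vtx x (t + i).+1 \in C.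
Proof.
move=> Ft Ft1; elim/ltn_ind: i x => -[|i] IH x le_m.
  by rewrite addn0; apply: Ft1; lia.
rewrite addnS; apply: (@grid_force C x (t + i).+1) => //; try lia.
- by apply: IH; lia.
- by apply: grid_up; lia.
- by left; apply: IH; lia.
- by left; apply: IH; lia.
- by right.
- left; rewrite vtx_pred; case: i IH le_m => [|i] IH le_m.
    by rewrite addn0; apply: Ft; lia.
  by rewrite addnS; apply: (IH i); lia.
Qed.

Lemma triangle_down t i x : row_full (t + i) -> row_full (t + i).+1 ->
  x + i <= m -> vtx x t \in C.
Proof.
elim/ltn_ind: i t x => -[|i] IH t x Fti Fti1 le_m.
  by rewrite addn0 in Fti; apply: Fti; lia.
have IHS y : y + i <= m -> vtx y t.+1 \in C.
  by move=> le_y; apply: (IH i); rewrite ?addSnnS.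
rewrite -vtx_pred; apply: (@grid_force C x t.+1) => //; try lia.
- by apply: IHS; lia.
- by apply: grid_down; lia.
- by left; apply: IHS; lia.
- by left; apply: IHS; lia.
- left; case: i IH IHS Fti Fti1 le_m => [|i] IH _ Fti Fti1 le_m.
    by rewrite addn1 in Fti1; apply: Fti1; lia.
  by apply: (IH i); rewrite ?addSnnS //; lia.
- by right.
Qed.

Lemma rows_full_band a n : row_full a -> row_full (a + n).+1 ->
  (forall i, 0 < i <= n -> vtx 0 (a + i) \in C) ->
  forall i, 0 < i <= n -> row_full (a + i).
Proof.
move=> Fa Fan col0 i rng_i x; elim/ltn_ind: x i rng_i => -[|x] IH i rng_i lt_xw.
  exact: col0.
apply: (@grid_force C x (a + i)) => //; try lia.
- by apply: IH; lia.
- by apply: grid_next.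
- by left; apply: IH; lia.
- by right.
- left; have [lt_in|le_ni] := ltnP i n.
    by rewrite -addnS; apply: IH; lia.
  have -> : i = n by lia.
  by apply: Fan; lia.
- left; case: i rng_i => [|[|i]] rng_i //.
    by rewrite addn1 vtx_pred; apply: Fa; lia.
  by rewrite addnS vtx_pred; apply: IH; lia.
Qed.

Lemma rows_full_up t : row_full t -> row_full t.+1 -> vtx w.-1 t.+2 \in C ->
  row_full t.+2.
Proof.
move=> Ft Ft1 endC x lt_xw; have [lt_xm|] := ltnP x m.
  by rewrite -addn1; apply: triangle_up; rewrite ?addn1.
by move=> le_mx; apply: tail_filled; lia.
Qed.

Lemma rows_full_down t : row_full t.+1 -> row_full t.+2 -> vtx w.-1 t \in C ->
  row_full t.
Proof.
move=> Ft1 Ft2 endC x lt_xw; have [lt_xm|le_mx] := ltnP x m.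
  by apply: (@triangle_down t 1); rewrite ?addn1.
by apply: tail_filled; lia.
Qed.

(* The row two above the full pair fills off the roots from its end vertex
   and, except at the last root, by the root triangle; the row in between is
   then a band. *)
Lemma rows_full_step t : row_full t -> row_full t.+1 -> vtx w.-1 t.+3 \in C ->
  row_full t.+2 /\ row_full t.+3.
Proof.
move=> Ft Ft1 endC.
have Ft3 : row_full t.+3.
  move=> x lt_xw; have [lt_xm|le_mx] := ltnP x m.-1.
    by have := @triangle_up t 2 x Ft Ft1; rewrite !addn2; apply; lia.
  exact: tail_filled.
split=> //; rewrite -(addn1 t.+1); apply: (rows_full_band (n := 1)) => //.
  by rewrite addn1.
move=> i /andP [i_gt0 le_i1]; have -> : i = 1 by lia.
by rewrite addn1 -(addn1 t); apply: triangle_up => //; lia.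
Qed.

(* Among the roots, forcing one step towards x = 0 needs both neighbouring
   rows, so the end vertices of rows [0, 2m) fill a diamond; it still
   contains the middle rows [m - 1] and [m]. *)
Lemma diamond_filled x t : (forall s, s < 2 * m -> vtx w.-1 s \in C) ->
  x < w -> m.-1 - x <= t -> t + (m.-1 - x) < 2 * m -> vtx x t \in C.
Proof.
move=> endC; have [d le_d] : exists d, m.-1 <= x + d by exists m; lia.
elim: d x t le_d => [|d IH] x t le_d lt_xw lo hi.
  by apply: tail_filled; [apply: endC | |]; lia.
have [le_d'|lt_d] := leqP m.-1 (x + d); first exact: IH.
apply: (@grid_force C x.+1 t) => //; try lia.
- by apply: IH; lia.
- by apply: grid_prev; lia.
- by right.
- by left; apply: IH; lia.
- by left; apply: IH; lia.
- left; case: t lo hi => [|t] lo hi; first lia.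
  by rewrite vtx_pred; apply: IH; lia.
Qed.

Lemma rows_full_upward a n : row_full a -> row_full a.+1 ->
  (forall i, i < n -> vtx w.-1 (a + i).+2 \in C) ->
  row_full (a + n) /\ row_full (a + n).+1.
Proof.
move=> Fa Fa1; elim: n => [|n IH] endC; first by rewrite addn0.
have [Fn Fn1] := IH (fun i lt_in => endC i (ltnW lt_in)).
by rewrite addnS; split=> //; apply: rows_full_up => //; apply: endC.
Qed.

Lemma rows_full_downward a n : row_full (a + n) -> row_full (a + n).+1 ->
  (forall i, i < n -> vtx w.-1 (a + i) \in C) -> row_full a /\ row_full a.+1.
Proof.
elim: n a => [|n IH] a Fan Fan1 endC; first by rewrite addn0 in Fan Fan1.
have [Fa1 Fa2] : row_full a.+1 /\ row_full a.+2.
  by apply: IH; rewrite ?addSnnS // => i lt_in; rewrite addSnnS; apply: endC.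
split=> //; apply: rows_full_down => //.
by have := endC 0; rewrite addn0; apply.
Qed.

Lemma rows_full_init : (forall t, t < 2 * m -> vtx w.-1 t \in C) ->
  forall t, t < 2 * m -> row_full t.
Proof.
move=> endC t lt_t.
have Fm1 : row_full m.-1 by move=> x lt_xw; apply: diamond_filled => //; lia.
have Fm : row_full m.-1.+1.
  by rewrite prednK // => x lt_xw; apply: diamond_filled => //; lia.
have [le_mt|lt_tm] := leqP m t.
  have endU i : i < t - m -> vtx w.-1 (m.-1 + i).+2 \in C.
    by move=> lt_i; apply: endC; lia.
  have [_] := rows_full_upward Fm1 Fm endU.
  by have -> : (m.-1 + (t - m)).+1 = t by lia.
have Et : t + (m.-1 - t) = m.-1 by lia.
have [] := @rows_full_downward t (m.-1 - t); rewrite ?Et //.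
by move=> i lt_i; apply: endC; lia.
Qed.

(* Between two pairs of full rows at distance at most 2m + 2 the first
   column fills from both sides by forcing along the cycle: each root
   triangle reaches m rows beyond its pair. *)
Lemma rows_full_gap b g : g <= 2 * m -> row_full b -> row_full b.+1 ->
  row_full (b + g).+2 -> row_full (b + g).+3 ->
  forall i, 0 < i <= g -> row_full (b.+1 + i).
Proof.
move=> le_g Fb Fb1 Fg2 Fg3; apply: rows_full_band => //.
move=> i /andP [i_gt0 le_ig]; have [le_im|lt_mi] := leqP i m.
  by rewrite addSn; apply: triangle_up.
have Eg : b.+1 + i + (g.+1 - i) = (b + g).+2 by lia.
by apply: (@triangle_down _ (g.+1 - i)); rewrite ?Eg //; lia.
Qed.

Lemma rows_full_alternate k : (forall t, t < 2 * m -> vtx w.-1 t \in C) ->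
  (forall i, i < k -> vtx w.-1 (2 * m + 2 * i).+1 \in C) ->
  forall t, t < 2 * m + 2 * k -> row_full t.
Proof.
move=> endC; elim: k => [|k IH] endC' t lt_t.
  by apply: rows_full_init => //; lia.
have IHk s : s < 2 * m + 2 * k -> row_full s.
  by apply: IH => i lt_i; apply: endC'; lia.
have [|le_t] := ltnP t (2 * m + 2 * k); first exact: IHk.
pose s := 2 * m + 2 * k - 2.
have [Fs2 Fs3] : row_full s.+2 /\ row_full s.+3.
  apply: rows_full_step; try (apply: IHk; lia).
  have -> : s.+3 = (2 * m + 2 * k).+1 by lia.
  exact: endC'.
by have [->|->] : t = s.+2 \/ t = s.+3 by lia.
Qed.

End ClosedSet.

Lemma Z_grid_le_h : h <= 2 * m -> Z grid <= h.
Proof.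
move=> le_h; pose S := [set vtx w.-1 t | t : 'I_h].
apply: (@leq_trans #|S|); last by rewrite -[h in _ <= h]card_ord leq_imset_card.
apply/Z_le_card/zero_forcing_set_closed => C subS clC.
apply: closed_setT => t lt_th; apply: (rows_full_init clC) => [s _|]; last lia.
rewrite -vtx_mod; apply: (subsetP subS).
exact: (imset_f (fun t : 'I_h => vtx w.-1 t) (x := Ordinal (ltn_pmod s h_gt0))).
Qed.

(* The forcing set: the end vertices of the first 2m rows and of every second
   row among the next 2k; the remaining at most 2m rows are a gap. *)
Lemma Z_grid_le k : 2 * m + 2 * k <= h -> h <= 4 * m + 2 * k ->
  Z grid <= 2 * m + k.
Proof.
move=> le_h le_h'.
pose S := [set vtx w.-1 t | t : 'I_(2 * m)]
      :|: [set vtx w.-1 (2 * m + 2 * i).+1 | i : 'I_k].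
apply: (@leq_trans #|S|); last first.
  apply: leq_trans (leq_of_leqif (leq_card_setU _ _)) _.
  by apply: leq_add; apply: leq_trans (leq_imset_card _ _) _; rewrite card_ord.
apply/Z_le_card/zero_forcing_set_closed => C subS clC.
have full_below : forall t, t < 2 * m + 2 * k -> row_full C t.
  apply: rows_full_alternate => // [t lt_t | i lt_i];
    apply: (subsetP subS); rewrite inE; apply/orP; [left | right].
    exact: (imset_f (fun t : 'I_(2 * m) => vtx w.-1 t) (x := Ordinal lt_t)).
  exact: (imset_f (fun i : 'I_k => vtx w.-1 (2 * m + 2 * i).+1)
                  (x := Ordinal lt_i)).
pose b := 2 * m + 2 * k - 2; pose g := h - 2 * m - 2 * k.
apply: closed_setT => t lt_th; have [|le_t] := ltnP t (2 * m + 2 * k).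
  exact: full_below.
have -> : t = b.+1 + (t - b.+1) by lia.
apply: (@rows_full_gap C clC b g); try (apply: full_below; lia); try lia.
- have -> : (b + g).+2 = 0 + h by lia.
  by apply/row_full_addh/full_below; lia.
- have -> : (b + g).+3 = 1 + h by lia.
  by apply/row_full_addh/full_below; lia.
Qed.

End Grid.

Theorem mainTheorem7 (w h m : nat) (U : {set 'I_w}) :
  2 <= w -> 3 <= h -> 1 <= m < w ->
  (U = [set i : 'I_w | i < m] \/ U = [set i : 'I_w | w - m <= i]) ->
  (h <= 2 * m -> Z (hprod (@path_rel w) U (@cycle_rel h)) <= h) /\
  (2 * m < h < 4 * m -> Z (hprod (@path_rel w) U (@cycle_rel h)) <= 2 * m) /\
  (4 * m < h -> Z (hprod (@path_rel w) U (@cycle_rel h)) <= (h + 1) %/ 2).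
Proof.
move=> _ h_ge3 /andP [m_gt0 m_lt_w] rootsU.
have h_gt0 : 0 < h by lia.
have [low ->] : exists low, hprod (@path_rel w) U (@cycle_rel h) = grid m low.
  by case: rootsU => ->; [exists true | exists false].
split; first exact: Z_grid_le_h.
split=> [/andP [lt_2m_h lt_h_4m] | lt_4m_h].
  by rewrite -[2 * m]addn0; apply: Z_grid_le; lia.
apply: leq_trans (@Z_grid_le _ _ _ low _ _ _ ((h - 4 * m).+1 %/ 2) _ _) _;
  lia.
Qed.
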